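(* There is an absolute constant $C$ such that for every $n$ and every matroid $M$ on ground set $[n]$ of rank $2$, $R^{lin}_{1/3}(rank_M)\le C$.
   Context: A matroid $M=([n],\mathcal I)$ has rank function $rank_M(S)=\max\{|I|: I\subseteq S, I\in\mathcal I\}$; we view it as a function on $\mathbb F_2^n$ by identifying $x$ with $\{i:x_i=1\}$. For $S\subseteq[n]$, $\chi_S(x)=\sum_{i\in S}x_i\pmod 2$. Exact randomized $\mathbb F_2$-sketch complexity: for $f\colon\mathbb F_2^n\to\mathbb R$ and $\delta\in[0,1]$, $R^{lin}_\delta(f)$ is the smallest integer $k$ such that there exists a probability distribution over $k$-tuples of subsets $\mathbf S_1,\dots,\mathbf S_k\subseteq[n]$ and a function $g\colon\mathbb F_2^k\to\mathbb R$ with $\Pr_{\mathbf S_1,\dots,\mathbf S_k}[g(\chi_{\mathbf S_1}(x),\dots,\chi_{\mathbf S_k}(x))=f(x)]\ge1-\delta$ for every $x\in\mathbb F_2^n$. *)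

From Stdlib Require Import Reals.
From mathcomp Require Import all_boot.
Set Implicit Arguments. Unset Strict Implicit. Unset Printing Implicit Defensive.

Definition is_matroid (n : nat) (Ind : {set {set 'I_n}}) : Prop :=
  [/\ set0 \in Ind,
      (forall A B : {set 'I_n}, B \in Ind -> A \subset B -> A \in Ind) &
      (forall A B : {set 'I_n}, A \in Ind -> B \in Ind -> #|A| < #|B| ->
         exists2 x, x \in B :\: A & x |: A \in Ind)].

Definition mrank (n : nat) (Ind : {set {set 'I_n}}) (S : {set 'I_n}) : nat :=
  \max_(I in Ind | I \subset S) #|I|.

Definition matroid_rank (n : nat) (Ind : {set {set 'I_n}}) : nat :=
  mrank Ind setT.

(* Points of F_2^n are boolean vectors; x is identified with {i | x_i = 1}. *)
Definition vec_to_set (n : nat) (x : {ffun 'I_n -> bool}) : {set 'I_n} :=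
  [set i | x i].

Definition rank_fun (n : nat) (Ind : {set {set 'I_n}}) (x : {ffun 'I_n -> bool}) : R :=
  INR (mrank Ind (vec_to_set x)).

Definition chi (n : nat) (S : {set 'I_n}) (x : {ffun 'I_n -> bool}) : bool :=
  \big[xorb/false]_(i in S) x i.

Definition sketch (n k : nat) (Ss : {ffun 'I_k -> {set 'I_n}}) (x : {ffun 'I_n -> bool})
  : {ffun 'I_k -> bool} := [ffun j => chi (Ss j) x].

Definition is_distr (n k : nat) (p : {ffun 'I_k -> {set 'I_n}} -> R) : Prop :=
  (forall Ss, Rle 0 (p Ss)) /\ \big[Rplus/R0]_Ss p Ss = R1.

Definition success_prob (n k : nat) (p : {ffun 'I_k -> {set 'I_n}} -> R)
  (g : {ffun 'I_k -> bool} -> R) (f : {ffun 'I_n -> bool} -> R) (x : {ffun 'I_n -> bool}) : R :=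
  \big[Rplus/R0]_Ss
     (if Req_EM_T (g (sketch Ss x)) (f x) then p Ss else R0).

Definition sketchable (n : nat) (f : {ffun 'I_n -> bool} -> R) (delta : R) (k : nat) : Prop :=
  exists (p : {ffun 'I_k -> {set 'I_n}} -> R) (g : {ffun 'I_k -> bool} -> R),
    is_distr p /\ forall x, Rle (Rminus 1 delta) (success_prob p g f x).

Definition Rlin_is (n : nat) (f : {ffun 'I_n -> bool} -> R) (delta : R) (r : nat) : Prop :=
  sketchable f delta r /\ forall k, sketchable f delta k -> r <= k.

From Stdlib Require Import Reals Lra Classical.
From mathcomp Require Import all_boot zify.
Set Implicit Arguments. Unset Strict Implicit. Unset Printing Implicit Defensive.

(* Call two non-loops parallel when they are not independent as a pair; in
   any matroid this is an equivalence relation on the non-loops, and in a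
   rank-2 matroid rank(x) is 0 if x has no non-loop, 1 if all non-loops of x
   are parallel, and 2 otherwise.  The sketch draws two random subsets p, q
   of [n] and five random subsets f_0..f_4.  Each parallel class gets the
   colour ([rep ∈ p] + 2[rep ∈ q]) ∈ {0,..,3} of a fixed representative, and
   the 20 parities are those of S_{c,j} = {non-loops of colour c in f_j}.
   The estimate is min(2, number of colours c with some S_{c,j} odd on x).
   Colours of x-free classes are never odd; a colour containing a fixed
   element a of x is missed with probability 1/32 (toggle a in the f_j);
   two distinct classes collide with probability 1/4.  Hence the error is
   at most 1/4 + 2/32 < 1/3 on every input. *)

Lemma sum_INR (I : finType) (P : pred I) (F : I -> nat) :
  \big[Rplus/R0]_(i | P i) INR (F i) = INR (\sum_(i | P i) F i).
Proof. by rewrite (big_morph INR plus_INR (erefl _)). Qed.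

Lemma sum_Rmult_r (I : finType) (P : pred I) (F : I -> R) (c : R) :
  \big[Rplus/R0]_(i | P i) (Rmult (F i) c) = (Rmult (\big[Rplus/R0]_(i | P i) F i) c).
Proof.
rewrite (big_morph (fun y => Rmult y c) (id1 := R0) (op1 := Rplus)) //.
- by move=> a b; rewrite Rmult_plus_distr_r.
- by rewrite Rmult_0_l.
Qed.

Lemma sum_fibres (O T : finType) (phi : O -> T) (P : pred T) :
  \sum_(t | P t) #|[set w | phi w == t]| = #|[set w | P (phi w)]|.
Proof.
rewrite -sum1_card (partition_big phi P) /=; last by move=> w; rewrite inE.
apply: eq_bigr => t Pt; rewrite -sum1_card; apply: eq_bigl => w.
by rewrite !inE; case: eqP => [-> | _]; rewrite ?Pt ?andbF ?andbT.
Qed.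

Definition pushforward (O T : finType) (phi : O -> T) (t : T) : R :=
  Rmult (INR #|[set w | phi w == t]|) (Rinv (INR #|O|)).

Lemma pushforward_event (O T : finType) (phi : O -> T) (P : pred T) :
  \big[Rplus/R0]_t (if P t then pushforward phi t else R0)
  = Rmult (INR #|[set w | P (phi w)]|) (Rinv (INR #|O|)).
Proof.
rewrite -sum_fibres big_mkcond -sum_INR -sum_Rmult_r.
by apply: eq_bigr => t _; case: (P t); rewrite //= Rmult_0_l.
Qed.

Lemma pushforward_distr n k (O : finType) (phi : O -> {ffun 'I_k -> {set 'I_n}}) :
  0 < #|O| -> is_distr (pushforward phi).
Proof.
move=> O_gt0; have N0 : Rlt 0 (INR #|O|) by apply: lt_0_INR; apply/ltP.
split=> [t | ].
  by apply: Rmult_le_pos; [exact: pos_INR | apply/Rlt_le/Rinv_0_lt_compat].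
have total := pushforward_event phi xpredT; rewrite /= in total.
rewrite total (_ : [set w | true] = setT) ?cardsT; last by apply/setP => w; rewrite !inE.
by apply: Rinv_r; apply: Rgt_not_eq.
Qed.

Lemma sketchable_of_count n k (O : finType) (phi : O -> {ffun 'I_k -> {set 'I_n}})
    (g : {ffun 'I_k -> bool} -> nat) (f : {ffun 'I_n -> bool} -> nat) :
  0 < #|O| ->
  (forall x, 2 * #|O| <= 3 * #|[set w | g (sketch (phi w) x) == f x]|) ->
  sketchable (fun x => INR (f x)) (Rdiv 1 3) k.
Proof.
move=> O_gt0 good.
have N0 : Rlt 0 (INR #|O|) by apply: lt_0_INR; apply/ltP.
exists (pushforward phi), (fun s => INR (g s)); split; first exact: pushforward_distr.
move=> x; rewrite /success_prob.
rewrite (eq_bigr (fun t => if g (sketch t x) == f x then pushforward phi t else R0)).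
  rewrite pushforward_event.
  have := le_INR _ _ (elimT leP (good x)); rewrite !mult_INR /=.
  set G := INR #|[set w | _]|; set N := INR #|O| => hGN.
  have NV : Rmult N (Rinv N) = R1 by apply: Rinv_r; apply: Rgt_not_eq.
  have V_pos : Rlt 0 (Rinv N) by apply: Rinv_0_lt_compat.
  have : Rle 0 (Rmult (Rminus (3 * G) (2 * N)) (Rinv N)).
    by apply: Rmult_le_pos; lra.
  nra.
move=> t _; case: Req_EM_T => [E | ne]; first by have /eqP -> := INR_eq _ _ E.
by case: eqP => // E; case: ne; rewrite E.
Qed.

Section ParallelClasses.

Variables (n : nat) (Ind : {set {set 'I_n}}).
Hypothesis matroid_Ind : is_matroid Ind.

Definition nonloop (i : 'I_n) : bool := [set i] \in Ind.

Definition parallel (i j : 'I_n) : bool :=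
  nonloop j && (([set i; j] \notin Ind) || (i == j)).

Definition rep (i : 'I_n) : 'I_n := odflt i [pick j | parallel i j].

Lemma nonloop_pair a b : [set a; b] \in Ind -> nonloop a && nonloop b.
Proof.
have [_ down _] := matroid_Ind => Iab.
by rewrite /nonloop !(down _ _ Iab) // sub1set !inE eqxx ?orbT.
Qed.

Lemma parallel_refl i : nonloop i -> parallel i i.
Proof. by rewrite /parallel => ->; rewrite eqxx orbT. Qed.

Lemma parallel_sym i j : nonloop i -> parallel i j -> parallel j i.
Proof. by rewrite /parallel => -> /andP[_]; rewrite setUC eq_sym. Qed.

(* Transitivity is the augmentation axiom applied to {j} and {i, k}. *)
Lemma parallel_trans i j k : parallel i j -> parallel j k -> parallel i k.
Proof.
have [_ _ augment] := matroid_Ind.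
move=> /andP[nj Hij] /andP[nk Hjk]; rewrite /parallel nk /=.
have [-> | nik] := eqVneq i k; first by rewrite orbT.
rewrite orbF; apply/negP => Iik.
have [z] : exists2 z, z \in [set i; k] :\: [set j] & z |: [set j] \in Ind.
  by apply: augment => //; rewrite cards1 cards2 nik.
rewrite !inE => /andP[nzj /orP[] /eqP ez]; subst z.
- by move: Hij; rewrite (negbTE nzj) orbF => /negP.
- by move: Hjk; rewrite eq_sym (negbTE nzj) orbF setUC => /negP.
Qed.

Lemma parallel_rep i : nonloop i -> parallel i (rep i).
Proof.
move=> ni; rewrite /rep; case: pickP => [j // | /(_ i)].
by rewrite parallel_refl.
Qed.

Lemma rep_parallel i j : nonloop i -> parallel i j -> rep i = rep j.
Proof.
move=> ni pij; have nj : nonloop j by case/andP: pij.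
have pji := parallel_sym ni pij.
rewrite /rep (@eq_pick _ _ (parallel j)); last first.
  by move=> y; apply/idP/idP; apply: parallel_trans.
by case: pickP => [// | /(_ j)]; rewrite parallel_refl.
Qed.

Lemma rep_indep_pair a b : a != b -> [set a; b] \in Ind -> rep a != rep b.
Proof.
move=> nab Iab; apply/eqP => E.
have /andP[na nb] := nonloop_pair Iab.
have pb := parallel_rep nb; rewrite -E in pb.
have := parallel_trans (parallel_rep na) (parallel_sym nb pb).
by rewrite /parallel nb /= (negbTE nab) orbF Iab.
Qed.

Lemma mrank_ge (I S : {set 'I_n}) : I \in Ind -> I \subset S -> #|I| <= mrank Ind S.
Proof. by move=> IInd IS; apply: leq_bigmax_cond; rewrite IInd IS. Qed.

Lemma mrank_le_matroid_rank (S : {set 'I_n}) : mrank Ind S <= matroid_rank Ind.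
Proof.
by apply/bigmax_leqP => I /andP[IInd _]; apply: mrank_ge IInd (subsetT I).
Qed.

Lemma mrank_le1 (S : {set 'I_n}) :
  (forall a b, a \in S -> b \in S -> a != b -> [set a; b] \notin Ind) ->
  mrank Ind S <= 1.
Proof.
have [_ down _] := matroid_Ind => noPair.
apply/bigmax_leqP => I /andP[IInd IS]; rewrite leqNgt.
apply/negP => /card_gt1P [a [b [aI bI nab]]].
have : [set a; b] \in Ind by apply: down IInd _; rewrite subUset !sub1set aI bI.
by apply/negP; apply: noPair => //; apply: (subsetP IS).
Qed.

Lemma mrank_loops (S : {set 'I_n}) :
  (forall a, a \in S -> ~~ nonloop a) -> mrank Ind S = 0.
Proof.
have [_ down _] := matroid_Ind => loops.
apply/eqP; rewrite -leqn0; apply/bigmax_leqP => I /andP[IInd IS].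
rewrite leqn0 cards_eq0; apply/eqP/setP => a; rewrite inE; apply/negP => aI.
have : nonloop a by rewrite /nonloop; apply: down IInd _; rewrite sub1set.
by apply/negP; apply: loops; apply: (subsetP IS).
Qed.

End ParallelClasses.

Lemma chi_addb n (S : {set 'I_n}) (x : {ffun 'I_n -> bool}) :
  chi S x = \big[addb/false]_(i in S) x i.
Proof.
apply: (big_ind2 (fun a b => a = b)) => // a1 a2 b1 b2 -> ->.
by case: a2; case: b2.
Qed.

Lemma chi_out n (S : {set 'I_n}) (x : {ffun 'I_n -> bool}) :
  (forall i, i \in S -> x i = false) -> chi S x = false.
Proof. by move=> outS; rewrite chi_addb big1. Qed.

Lemma chiD1 n (S : {set 'I_n}) (x : {ffun 'I_n -> bool}) a :
  a \in S -> chi S x = x a (+) chi (S :\ a) x.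
Proof.
move=> aS; rewrite !chi_addb (bigD1 a) //=; congr (_ (+) _).
by apply: eq_bigl => i; rewrite !inE andbC.
Qed.

Definition toggle n (a : 'I_n) (S : {set 'I_n}) : {set 'I_n} :=
  if a \in S then S :\ a else a |: S.

Lemma in_toggle n (a i : 'I_n) S :
  (i \in toggle a S) = (if i == a then a \notin S else i \in S).
Proof.
rewrite /toggle; have [-> | nia] := eqVneq i a.
  by case: (boolP (a \in S)) => aS; rewrite !inE eqxx ?aS.
by case: (a \in S); rewrite !inE (negbTE nia).
Qed.

Lemma toggleK n (a : 'I_n) : involutive (toggle a).
Proof.
move=> S; apply/setP => i; rewrite !in_toggle.
by have [-> | nia] := eqVneq i a; rewrite ?eqxx ?negbK ?(negbTE nia).
Qed.

Lemma chi_toggle n (S : {set 'I_n}) (x : {ffun 'I_n -> bool}) a :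
  x a -> chi (toggle a S) x = ~~ chi S x.
Proof.
move=> xa; rewrite /toggle; case: (boolP (a \in S)) => aS.
  by rewrite (chiD1 x aS) xa negbK.
have aSa : a \in a |: S by rewrite !inE eqxx.
by rewrite (chiD1 x aSa) setU1K // xa.
Qed.

Lemma card_labelled_moves (O T : finType) (B : {set O}) (phi : T -> O -> O) (F : O -> T) :
  (forall v, injective (phi v)) -> (forall v w, w \in B -> F (phi v w) = v) ->
  #|B| * #|T| <= #|O|.
Proof.
move=> inj_phi label.
have : #|[set phi p.2 p.1 | p in setX B [set: T]]| = #|setX B [set: T]|.
  apply: card_in_imset => [[w v] [w' v']] /setXP[wB _] /setXP[w'B _] /= E.
  have ev : v = v' by rewrite -(label v w wB) -(label v' w' w'B) E.
  by subst v'; rewrite (inj_phi _ _ _ E).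
by rewrite cardsX cardsT => <-; apply: max_card.
Qed.

(* A sample: the two colouring sets p, q and the five subsets f_0..f_4. *)
Local Notation sample n :=
  ({set 'I_n} * {set 'I_n} * {ffun 'I_5 -> {set 'I_n}})%type.

Definition color n (w : sample n) (i : 'I_n) : nat :=
  (i \in w.1.1) + 2 * (i \in w.1.2).

Lemma color_lt4 n (w : sample n) i : color w i < 4.
Proof. by rewrite /color; case: (_ \in _); case: (_ \in _). Qed.

Section Sketch.

Variables (n : nat) (Ind : {set {set 'I_n}}).

Definition class_color (w : sample n) (i : 'I_n) : 'I_4 :=
  Ordinal (color_lt4 w (rep Ind i)).

Definition parity_set (w : sample n) (c : 'I_4) (j : 'I_5) : {set 'I_n} :=
  [set i | nonloop Ind i && (class_color w i == c) && (i \in w.2 j)].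

Definition sketch_sets (w : sample n) : {ffun 'I_20 -> {set 'I_n}} :=
  [ffun r : 'I_20 => parity_set w (inord (r %% 4)) (inord (r %/ 4))].

End Sketch.

Definition hit (s : {ffun 'I_20 -> bool}) (c : 'I_4) : bool :=
  [exists r : 'I_20, (r %% 4 == c) && s r].

Definition estimate (s : {ffun 'I_20 -> bool}) : nat :=
  minn 2 #|[set c : 'I_4 | hit s c]|.

Lemma hitP n (Ind : {set {set 'I_n}}) (w : sample n) x c :
  reflect (exists j, chi (parity_set Ind w c j) x) (hit (sketch (sketch_sets Ind w) x) c).
Proof.
apply: (iffP existsP) => [[r /andP[/eqP rc]] | [j odd_cj]].
  by rewrite /sketch !ffunE rc inord_val; exists (inord (r %/ 4)).
have lt : c + 4 * j < 20 by have := ltn_ord c; have := ltn_ord j; lia.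
have mod_c : (c + 4 * j) %% 4 = c by have := ltn_ord c; lia.
have div_j : (c + 4 * j) %/ 4 = j by have := ltn_ord c; lia.
exists (Ordinal lt); rewrite /= mod_c eqxx /sketch !ffunE /= mod_c div_j.
by rewrite !inord_val.
Qed.

Definition collision n (Ind : {set {set 'I_n}}) (a b : 'I_n) : {set sample n} :=
  [set w | class_color Ind w a == class_color Ind w b].

Definition missed n (Ind : {set {set 'I_n}}) (x : {ffun 'I_n -> bool}) (a : 'I_n)
  : {set sample n} :=
  [set w | [forall j, ~~ chi (parity_set Ind w (class_color Ind w a) j) x]].

(* Two distinct elements get equal colours for 1/4 of the samples: flipping
   the membership of [v] in p and in q realises all four colour differences. *)
Lemma color_collision_bound n (u v : 'I_n) :
  u != v -> #|[set w : sample n | color w u == color w v]| * 4 <= #|{: sample n}|.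
Proof.
move=> nuv.
have := @card_labelled_moves _ (bool * bool)%type [set w | color w u == color w v]
  (fun t w => (if t.1 then toggle v w.1.1 else w.1.1,
               if t.2 then toggle v w.1.2 else w.1.2, w.2))
  (fun w => ((u \in w.1.1) != (v \in w.1.1), (u \in w.1.2) != (v \in w.1.2))).
rewrite card_prod card_bool; apply.
- move=> [t1 t2] [[p q] f] [[p' q'] f'] /= [Ep Eq ->]; congr (_, _, _).
  + by move: Ep; case: t1 => //; apply: (can_inj (toggleK _)).
  + by move: Eq; case: t2 => //; apply: (can_inj (toggleK _)).
- move=> [t1 t2] [[p q] f]; rewrite inE /color /=.
  case: t1; case: t2; rewrite /= ?in_toggle ?eqxx ?(negbTE nuv);
  by case: (u \in p); case: (v \in p); case: (u \in q); case: (v \in q).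
Qed.

Lemma collision_bound n (Ind : {set {set 'I_n}}) a b :
  rep Ind a != rep Ind b -> #|collision Ind a b| * 4 <= #|{: sample n}|.
Proof.
move=> nab; apply: leq_trans (color_collision_bound nab).
by rewrite leq_mul2r; apply/orP; right; apply/subset_leq_card/subsetP => w;
  rewrite !inE -val_eqE.
Qed.

(* The colour of a non-loop [a] with x_a = 1 is missed for 1/32 of the samples:
   toggling [a] in any of the f_j flips exactly the j-th parity of that colour. *)
Lemma missed_bound n (Ind : {set {set 'I_n}}) (x : {ffun 'I_n -> bool}) a :
  nonloop Ind a -> x a -> #|missed Ind x a| * 32 <= #|{: sample n}|.
Proof.
move=> na xa.
pose move_by (t : {ffun 'I_5 -> bool}) (w : sample n) : sample n :=
  (w.1.1, w.1.2, [ffun j => if t j then toggle a (w.2 j) else w.2 j]).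
have := @card_labelled_moves _ {ffun 'I_5 -> bool} (missed Ind x a) move_by
  (fun w => [ffun j => chi (parity_set Ind w (class_color Ind w a) j) x]).
rewrite card_ffun card_bool card_ord; apply.
- move=> t [[p q] f] [[p' q'] f'] /= [-> -> E]; congr (_, _, _); apply/ffunP => j.
  move/ffunP: E => /(_ j); rewrite !ffunE; case: (t j) => //.
  exact: (can_inj (toggleK a)).
- move=> t [[p q] f]; rewrite inE => /forallP even_w; apply/ffunP => j.
  have same_colors : class_color Ind (move_by t (p, q, f)) =1 class_color Ind (p, q, f).
    by move=> i; apply: val_inj.
  have moved_set : parity_set Ind (move_by t (p, q, f)) (class_color Ind (p, q, f) a) j
      = if t j then toggle a (parity_set Ind (p, q, f) (class_color Ind (p, q, f) a) j)
        else parity_set Ind (p, q, f) (class_color Ind (p, q, f) a) j.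
    apply/setP => i; rewrite !inE ffunE same_colors; case: (t j); rewrite ?in_toggle !inE //.
    by have [-> | //] := eqVneq i a; rewrite na eqxx.
  rewrite !ffunE same_colors moved_set; have := even_w j.
  by case: (t j) => /negbTE even_j; rewrite ?chi_toggle // even_j.
Qed.

Section Correctness.

Variables (n : nat) (Ind : {set {set 'I_n}}) (x : {ffun 'I_n -> bool}).

Definition good : {set sample n} :=
  [set w | estimate (sketch (sketch_sets Ind w) x) == mrank Ind (vec_to_set x)].

Local Notation hit_colors w := [set c : 'I_4 | hit (sketch (sketch_sets Ind w) x) c].

Lemma class_color_rep w i j : rep Ind i = rep Ind j -> class_color Ind w i = class_color Ind w j.
Proof. by move=> Eij; apply: val_inj; rewrite /= Eij. Qed.

Lemma hit_support w c :
  c \in hit_colors w -> exists2 i, x i & nonloop Ind i && (class_color Ind w i == c).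
Proof.
rewrite inE => /hitP[j odd_j].
have /existsP[i /and3P[xi ni ci]] :
    [exists i, [&& x i, nonloop Ind i & class_color Ind w i == c]].
  apply: contraLR odd_j; rewrite negb_exists => /forallP noSupport.
  rewrite chi_out // => i; rewrite !inE => /andP[/andP[ni ci] _].
  by apply/negbTE; move: (noSupport i); rewrite ni ci !andbT.
by exists i => //; rewrite ni ci.
Qed.

Lemma hit_unless_missed w a : w \notin missed Ind x a -> class_color Ind w a \in hit_colors w.
Proof.
by rewrite !inE negb_forall => /existsP[j]; rewrite negbK => odd_j; apply/hitP; exists j.
Qed.

(* Rank 0: no colour is ever hit, so every sample is good. *)
Lemma good_rank0 : is_matroid Ind -> (forall i, x i -> ~~ nonloop Ind i) -> good = setT.
Proof.
move=> matroid_Ind loops; apply/setP => w; rewrite !inE.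
rewrite (mrank_loops matroid_Ind) => [| a]; last by rewrite inE; apply: loops.
rewrite /estimate; have -> : hit_colors w = set0.
  apply/setP => c; rewrite in_set0; apply/negbTE/negP => /hit_support[i xi /andP[ni _]].
  by move: (loops i xi); rewrite ni.
by rewrite cards0.
Qed.

(* Rank 1: all non-loops of [x] share the colour of [a], so the estimate is
   wrong only if that colour is missed. *)
Lemma bad_rank1 a : is_matroid Ind -> nonloop Ind a -> x a ->
  (forall i j, x i -> x j -> i != j -> [set i; j] \notin Ind) ->
  ~: good \subset missed Ind x a.
Proof.
move=> matroid_Ind na xa noPair.
have rank1 : mrank Ind (vec_to_set x) = 1.
  apply/eqP; rewrite eqn_leq mrank_le1 //=; last by move=> i j; rewrite !inE; apply: noPair.
  by apply: leq_trans (mrank_ge na _); rewrite ?cards1 // sub1set inE.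
have same_class i : x i -> nonloop Ind i -> rep Ind i = rep Ind a.
  move=> xi ni; apply/esym/(rep_parallel matroid_Ind na).
  rewrite /parallel ni /=; have [// | nai] := eqVneq a i; first by rewrite orbT.
  by rewrite noPair.
apply/subsetP => w; rewrite inE; apply: contraR => not_missed.
rewrite inE /estimate; have -> : hit_colors w = [set class_color Ind w a].
  apply/eqP; rewrite eqEsubset sub1set hit_unless_missed // andbT.
  apply/subsetP => c /hit_support[i xi /andP[ni /eqP <-]].
  by rewrite inE (class_color_rep w (same_class i xi ni)).
by rewrite cards1 rank1.
Qed.

Lemma bad_rank2 a b : is_matroid Ind -> matroid_rank Ind = 2 ->
  x a -> x b -> a != b -> [set a; b] \in Ind ->
  ~: good \subset (collision Ind a b :|: missed Ind x a) :|: missed Ind x b.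
Proof.
move=> matroid_Ind rank2 xa xb nab Iab.
have rank_x : mrank Ind (vec_to_set x) = 2.
  apply/eqP; rewrite eqn_leq -{1}rank2 mrank_le_matroid_rank //=.
  apply: leq_trans (mrank_ge Iab _); first by rewrite cards2 nab.
  by rewrite subUset !sub1set !inE xa xb.
apply/subsetP => w; rewrite inE; apply: contraR; rewrite !in_setU !negb_or.
move=> /andP[/andP[no_collision /hit_unless_missed hit_a] /hit_unless_missed hit_b].
rewrite inE in no_collision.
have two_hits : [set class_color Ind w a; class_color Ind w b] \subset hit_colors w.
  by rewrite subUset !sub1set hit_a hit_b.
rewrite inE rank_x /estimate; apply/eqP/minn_idPl.
by apply: leq_trans (subset_leq_card two_hits); rewrite cards2 (negbTE no_collision).
Qed.

(* In a rank-2 matroid at least 2/3 of the samples are good for [x]: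
   the failure probability is at most 1/4 + 1/32 + 1/32. *)
Lemma good_fraction : is_matroid Ind -> matroid_rank Ind = 2 ->
  2 * #|{: sample n}| <= 3 * #|good|.
Proof.
move=> matroid_Ind rank2; have card_bad := cardsC good.
have [[a [b [xa xb nab Iab]]] | noPair] :=
  classic (exists a b, [/\ x a, x b, a != b & [set a; b] \in Ind]).
- have /andP[na nb] := nonloop_pair matroid_Ind Iab.
  have := subset_leq_card (bad_rank2 matroid_Ind rank2 xa xb nab Iab).
  have := (leq_card_setU (collision Ind a b :|: missed Ind x a) (missed Ind x b)).1.
  have := (leq_card_setU (collision Ind a b) (missed Ind x a)).1.
  have := collision_bound (rep_indep_pair matroid_Ind nab Iab).
  have := missed_bound na xa; have := missed_bound nb xb.
  by rewrite -card_bad; lia.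
have noPair' i j : x i -> x j -> i != j -> [set i; j] \notin Ind.
  by move=> xi xj nij; apply/negP => Iij; apply: noPair; exists i, j.
have [[a /andP[xa na]] | loops] := classic (exists a, x a && nonloop Ind a).
  have := subset_leq_card (bad_rank1 matroid_Ind na xa noPair').
  by have := missed_bound na xa; rewrite -card_bad; lia.
rewrite (good_rank0 matroid_Ind) => [| i xi]; first by rewrite cardsT leq_mul.
by apply/negP => ni; apply: loops; exists i; rewrite xi.
Qed.

End Correctness.

Lemma least_witness (P : nat -> Prop) m : P m ->
  exists r, (P r /\ forall k, P k -> r <= k) /\ r <= m.
Proof.
elim/ltn_ind: m => m IH Pm.
have [[k [km Pk]] | noSmaller] := classic (exists k, k < m /\ P k).
  have [r [least_r rk]] := IH k km Pk.
  by exists r; split => //; apply: leq_trans rk (ltnW km).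
exists m; split => //; split => // k Pk; rewrite leqNgt; apply/negP => km.
by apply: noSmaller; exists k.
Qed.

Theorem theorem1 :
  exists C : nat,
    forall (n : nat) (Ind : {set {set 'I_n}}),
      is_matroid Ind -> matroid_rank Ind = 2 ->
      exists r : nat, Rlin_is (rank_fun Ind) (Rdiv 1 3) r /\ r <= C.
Proof.
exists 20 => n Ind matroid_Ind rank2.
have sketch20 : sketchable (rank_fun Ind) (Rdiv 1 3) 20.
  apply: (@sketchable_of_count n 20 _ (sketch_sets Ind) estimate
            (fun x => mrank Ind (vec_to_set x))).
    by apply/card_gt0P; exists (set0, set0, [ffun => set0]).
  by move=> x; apply: good_fraction.
have [r [[sketch_r least_r] r_le20]] := least_witness sketch20.
by exists r.
Qed.
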